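(* Let $P=\{S_1,\ldots,S_n\}$ be a homothetic packing of $n$ squares with contact graph $G=([n],E)$, and let $\{i,j\},\{k,\ell\}\in E$ be two edges sharing no vertex. Then: (1) the interiors of $S_i\cup S_j$ and $S_k\cup S_\ell$ are disjoint; (2) if the closed segments $[p_i,p_j]$ and $[p_k,p_\ell]$ intersect, then the squares $S_i,S_j,S_k,S_\ell$ share a corner, the edges $\{i,j\},\{k,\ell\}$ lie in $E_x\cap E_y$, and the edges $\{i,k\},\{i,\ell\},\{j,k\},\{j,\ell\}$ lie in the symmetric difference $E_x\triangle E_y$.
   Context: Let $S=\{(x,y): -1\le x,y\le 1\}$. A homothetic packing of $n$ squares is a set $P=\{S_1,\ldots,S_n\}$ with $S_i=r_iS+p_i$, $r_i>0$, $p_i=(x_i,y_i)\in\mathbb{R}^2$, such that distinct squares have disjoint interiors. Its contact graph is $G=([n],E)$ where $\{i,j\}\in E$ iff $i\ne j$ and $S_i\cap S_j\ne\emptyset$. $E_x$ is the set of pairs $\{i,j\}\in E$ with $r_i+r_j=|x_i-x_j|\ge|y_i-y_j|$, and $E_y$ the set with $r_i+r_j=|y_i-y_j|\ge|x_i-x_j|$. $[p,q]$ denotes the closed line segment between $p$ and $q$. Four squares share a corner if they have a common point which is a corner of each of them. *)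

From Stdlib Require Import Reals.
Open Scope R_scope.

Definition pt := (R * R)%type.

(* A packing of n squares: square i (for i < n) is S_i = r i * S + (px i, py i),
   i.e. the closed axis-parallel square of half-side r i centred at (px i, py i). *)
Definition in_square (r px py : nat -> R) (i : nat) (z : pt) : Prop :=
  Rabs (fst z - px i) <= r i /\ Rabs (snd z - py i) <= r i.

(* Topological interior of a set of the plane (product topology, given by
   sup-norm balls). *)
Definition interior2 (A : pt -> Prop) (z : pt) : Prop :=
  exists eps, 0 < eps /\
    forall w : pt, Rabs (fst w - fst z) < eps -> Rabs (snd w - snd z) < eps -> A w.

Definition homothetic_packing (n : nat) (r px py : nat -> R) : Prop :=
  (forall i, (i < n)%nat -> 0 < r i) /\
  (forall i j, (i < n)%nat -> (j < n)%nat -> i <> j ->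
     forall z, ~ (interior2 (in_square r px py i) z /\ interior2 (in_square r px py j) z)).

Definition edgeE (n : nat) (r px py : nat -> R) (i j : nat) : Prop :=
  (i < n)%nat /\ (j < n)%nat /\ i <> j /\
  exists z, in_square r px py i z /\ in_square r px py j z.

Definition edgeEx (n : nat) (r px py : nat -> R) (i j : nat) : Prop :=
  edgeE n r px py i j /\
  r i + r j = Rabs (px i - px j) /\ Rabs (px i - px j) >= Rabs (py i - py j).

Definition edgeEy (n : nat) (r px py : nat -> R) (i j : nat) : Prop :=
  edgeE n r px py i j /\
  r i + r j = Rabs (py i - py j) /\ Rabs (py i - py j) >= Rabs (px i - px j).

Definition edge_symdiff (n : nat) (r px py : nat -> R) (i j : nat) : Prop :=
  (edgeEx n r px py i j /\ ~ edgeEy n r px py i j) \/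
  (edgeEy n r px py i j /\ ~ edgeEx n r px py i j).

Definition in_segment (p q z : pt) : Prop :=
  exists t, 0 <= t <= 1 /\
    fst z = (1 - t) * fst p + t * fst q /\ snd z = (1 - t) * snd p + t * snd q.

Definition is_corner (r px py : nat -> R) (i : nat) (z : pt) : Prop :=
  (fst z = px i + r i \/ fst z = px i - r i) /\
  (snd z = py i + r i \/ snd z = py i - r i).

Definition centre (px py : nat -> R) (i : nat) : pt := (px i, py i).

From Stdlib Require Import Reals Lra Psatz.
Open Scope R_scope.

(* The squares of the packing are the closed balls of the sup-norm distance [dinf]
   around their centres, and the packing condition says [r a + r b <= dinf p_a p_b].

   (1) A point interior to both unions lies in some S_a, a in {i, j}; pushing it
   slightly towards p_a lands in the open square of S_a and, still near the point,
   in some S_b, b in {k, l}; pushing once more towards p_b gives a point of both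
   open squares.

   (2) If z lies on both segments then [dinf z p_i + dinf z p_j = dinf p_i p_j <= r_i + r_j],
   likewise for k, l, while the packing gives [r_a + r_b <= dinf z p_a + dinf z p_b] for the
   four cross pairs; adding up forces [dinf z p_a = r_a] for all four squares, hence
   z = p_i + r_i u = p_j - r_j u = p_k + r_k v = p_l - r_l v with u, v in [-1,1]^2.
   Separating S_i from S_k needs a coordinate where u and v are opposite units,
   separating S_i from S_l one where they are equal units.  So u and v are orthogonal
   sign vectors: z is a common corner, and each pair of squares touches along one
   coordinate (i-j and k-l along both). *)

Definition dinf (p q : pt) : R :=
  Rmax (Rabs (fst p - fst q)) (Rabs (snd p - snd q)).

Definition lerp (p q : pt) (t : R) : pt :=
  ((1 - t) * fst p + t * fst q, (1 - t) * snd p + t * snd q).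

Lemma dinf_le_iff (p q : pt) (e : R) :
  dinf p q <= e <-> Rabs (fst p - fst q) <= e /\ Rabs (snd p - snd q) <= e.
Proof.
  unfold dinf; split.
  - intros H; split; eapply Rle_trans; [apply Rmax_l | exact H | apply Rmax_r | exact H].
  - intros [Hx Hy]; now apply Rmax_lub.
Qed.

Lemma dinf_lt_iff (p q : pt) (e : R) :
  dinf p q < e <-> Rabs (fst p - fst q) < e /\ Rabs (snd p - snd q) < e.
Proof. apply Rmax_Rlt. Qed.

Lemma le_dinf_iff (p q : pt) (e : R) :
  e <= dinf p q <-> e <= Rabs (fst p - fst q) \/ e <= Rabs (snd p - snd q).
Proof. apply Rmax_Rle. Qed.

Lemma dinf_comm (p q : pt) : dinf p q = dinf q p.
Proof. unfold dinf; now rewrite (Rabs_minus_sym (fst p)), (Rabs_minus_sym (snd p)). Qed.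

Lemma dinf_nonneg (p q : pt) : 0 <= dinf p q.
Proof. eapply Rle_trans; [apply Rabs_pos | apply Rmax_l]. Qed.

Lemma dinf_triangle (p q w : pt) : dinf p w <= dinf p q + dinf q w.
Proof.
  apply dinf_le_iff.
  assert (Hq := proj1 (dinf_le_iff p q _) (Rle_refl _)).
  assert (Hw := proj1 (dinf_le_iff q w _) (Rle_refl _)).
  pose proof (Rabs_triang (fst p - fst q) (fst q - fst w)).
  pose proof (Rabs_triang (snd p - snd q) (snd q - snd w)).
  replace (fst p - fst q + (fst q - fst w)) with (fst p - fst w) in * by ring.
  replace (snd p - snd q + (snd q - snd w)) with (snd p - snd w) in * by ring.
  split; lra.
Qed.

Lemma dinf_lerp_l (p q : pt) (t : R) : dinf (lerp p q t) p = Rabs t * dinf p q.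
Proof.
  unfold dinf, lerp; simpl.
  replace ((1 - t) * fst p + t * fst q - fst p) with (t * (fst q - fst p)) by ring.
  replace ((1 - t) * snd p + t * snd q - snd p) with (t * (snd q - snd p)) by ring.
  rewrite !Rabs_mult, RmaxRmult by apply Rabs_pos.
  now rewrite (Rabs_minus_sym (fst q)), (Rabs_minus_sym (snd q)).
Qed.

Lemma dinf_lerp_r (p q : pt) (t : R) : dinf (lerp p q t) q = Rabs (1 - t) * dinf p q.
Proof.
  unfold dinf, lerp; simpl.
  replace ((1 - t) * fst p + t * fst q - fst q) with ((1 - t) * (fst p - fst q)) by ring.
  replace ((1 - t) * snd p + t * snd q - snd q) with ((1 - t) * (snd p - snd q)) by ring.
  now rewrite !Rabs_mult, RmaxRmult by apply Rabs_pos.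
Qed.

Lemma in_segment_lerp (p q z : pt) :
  in_segment p q z -> exists t, 0 <= t <= 1 /\ z = lerp p q t.
Proof.
  intros (t & Ht & Hx & Hy); exists t; split; [exact Ht|].
  destruct z; unfold lerp; simpl in *; now rewrite Hx, Hy.
Qed.

Lemma in_square_dinf (r px py : nat -> R) (a : nat) (z : pt) :
  in_square r px py a z <-> dinf z (centre px py a) <= r a.
Proof. now rewrite dinf_le_iff. Qed.

Lemma closed_ball_approx (c z : pt) (rho e : R) :
  0 < rho -> 0 < e -> dinf z c <= rho ->
  exists w, dinf w c < rho /\ dinf w z < e.
Proof.
  intros Hrho He Hz.
  set (lam := e / (e + rho)).
  assert (Hlam_pos : 0 < lam) by (apply Rdiv_lt_0_compat; lra).
  assert (Hlam : lam * (e + rho) = e) by (unfold lam; field; lra).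
  pose proof (dinf_nonneg z c).
  exists (lerp z c lam); rewrite dinf_lerp_l, dinf_lerp_r, !Rabs_pos_eq by nra.
  split; nra.
Qed.

Lemma open_ball_interior (r px py : nat -> R) (a : nat) (w : pt) :
  dinf w (centre px py a) < r a -> interior2 (in_square r px py a) w.
Proof.
  intros Hw; exists (r a - dinf w (centre px py a)); split; [lra|].
  intros w' Hx Hy; apply in_square_dinf.
  assert (Hw' : dinf w' w < r a - dinf w (centre px py a)) by now apply dinf_lt_iff.
  pose proof (dinf_triangle w' w (centre px py a)); lra.
Qed.

Lemma packing_open_balls_disjoint (n : nat) (r px py : nat -> R) (a b : nat) (w : pt) :
  homothetic_packing n r px py -> (a < n)%nat -> (b < n)%nat -> a <> b ->
  dinf w (centre px py a) < r a -> dinf w (centre px py b) < r b -> False.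
Proof.
  intros [_ Hdisj] Ha Hb Hab Hwa Hwb.
  apply (Hdisj a b Ha Hb Hab w); split; now apply open_ball_interior.
Qed.

Lemma open_ball_meets_square (r px py : nat -> R) (a b : nat) (w : pt) :
  0 < r b -> dinf w (centre px py a) < r a -> in_square r px py b w ->
  exists w', dinf w' (centre px py a) < r a /\ dinf w' (centre px py b) < r b.
Proof.
  intros Hrb Hwa Hwb; apply in_square_dinf in Hwb.
  destruct (closed_ball_approx _ _ _ (r a - dinf w (centre px py a)) Hrb ltac:(lra) Hwb)
    as (w' & Hw'b & Hw'w).
  exists w'; split; [|exact Hw'b].
  pose proof (dinf_triangle w' w (centre px py a)); lra.
Qed.

Lemma union_interiors_disjoint (n : nat) (r px py : nat -> R) (i j k l : nat) :
  homothetic_packing n r px py ->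
  (i < n)%nat -> (j < n)%nat -> (k < n)%nat -> (l < n)%nat ->
  i <> k -> i <> l -> j <> k -> j <> l ->
  forall z,
     ~ (interior2 (fun w : pt => in_square r px py i w \/ in_square r px py j w) z /\
        interior2 (fun w : pt => in_square r px py k w \/ in_square r px py l w) z).
Proof.
  intros Hpack Hi Hj Hk Hl ik il jk jl z [[e1 [He1 Hij]] [e2 [He2 Hkl]]].
  assert (Hpos := proj1 Hpack).
  assert (Hfar : forall a, (a < n)%nat -> a <> k -> a <> l -> ~ in_square r px py a z).
  { intros a Ha ak al Hza; apply in_square_dinf in Hza.
    destruct (closed_ball_approx _ _ _ _ (Hpos a Ha) He2 Hza) as (w & Hwa & Hwz).
    apply dinf_lt_iff in Hwz.
    assert (Hapart : forall b, (b < n)%nat -> a <> b -> ~ in_square r px py b w).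
    { intros b Hb ab Hwb.
      destruct (open_ball_meets_square r px py a b w (Hpos b Hb) Hwa Hwb) as (w' & Hw'a & Hw'b).
      exact (packing_open_balls_disjoint n r px py a b w' Hpack Ha Hb ab Hw'a Hw'b). }
    destruct (Hkl w (proj1 Hwz) (proj2 Hwz)) as [Hwb|Hwb];
      [exact (Hapart k Hk ak Hwb) | exact (Hapart l Hl al Hwb)]. }
  assert (Hz : in_square r px py i z \/ in_square r px py j z)
    by (apply Hij; rewrite Rminus_diag, Rabs_R0; lra).
  destruct Hz as [Hz|Hz]; [exact (Hfar i Hi ik il Hz) | exact (Hfar j Hj jk jl Hz)].
Qed.

Lemma packing_dinf (n : nat) (r px py : nat -> R) (a b : nat) :
  homothetic_packing n r px py -> (a < n)%nat -> (b < n)%nat -> a <> b ->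
  r a + r b <= dinf (centre px py a) (centre px py b).
Proof.
  intros Hpack Ha Hb Hab.
  destruct (Rle_lt_dec (r a + r b) (dinf (centre px py a) (centre px py b))) as [Hle|Hlt];
    [exact Hle | exfalso].
  pose proof (proj1 Hpack a Ha); pose proof (proj1 Hpack b Hb).
  set (lam := r a / (r a + r b)).
  assert (Hlam : lam * (r a + r b) = r a) by (unfold lam; field; lra).
  assert (Hlam_pos : 0 < lam) by (apply Rdiv_lt_0_compat; lra).
  apply (packing_open_balls_disjoint n r px py a b
           (lerp (centre px py a) (centre px py b) lam) Hpack Ha Hb Hab);
    rewrite ?dinf_lerp_l, ?dinf_lerp_r, Rabs_pos_eq by nra; nra.
Qed.

Lemma edge_dinf (n : nat) (r px py : nat -> R) (a b : nat) :
  edgeE n r px py a b -> dinf (centre px py a) (centre px py b) <= r a + r b.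
Proof.
  intros (_ & _ & _ & w & Hwa & Hwb); apply in_square_dinf in Hwa, Hwb.
  pose proof (dinf_triangle (centre px py a) w (centre px py b)).
  rewrite dinf_comm in Hwa; lra.
Qed.

Lemma dinf_segment (p q z : pt) :
  in_segment p q z -> dinf z p + dinf z q = dinf p q.
Proof.
  intros Hz; destruct (in_segment_lerp p q z Hz) as (t & Ht & ->).
  rewrite dinf_lerp_l, dinf_lerp_r, !Rabs_pos_eq by lra; ring.
Qed.

Lemma crossing_point_radii (n : nat) (r px py : nat -> R) (i j k l : nat) (z : pt) :
  homothetic_packing n r px py ->
  edgeE n r px py i j -> edgeE n r px py k l ->
  i <> k -> i <> l -> j <> k -> j <> l ->
  in_segment (centre px py i) (centre px py j) z ->
  in_segment (centre px py k) (centre px py l) z ->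
  dinf z (centre px py i) = r i /\ dinf z (centre px py j) = r j /\
  dinf z (centre px py k) = r k /\ dinf z (centre px py l) = r l.
Proof.
  intros Hpack Eij Ekl ik il jk jl Sij Skl.
  pose proof Eij as (Hi & Hj & _); pose proof Ekl as (Hk & Hl & _).
  assert (Hsep : forall a b, (a < n)%nat -> (b < n)%nat -> a <> b ->
            r a + r b <= dinf z (centre px py a) + dinf z (centre px py b)).
  { intros a b Ha Hb ab.
    pose proof (packing_dinf n r px py a b Hpack Ha Hb ab).
    pose proof (dinf_triangle (centre px py a) z (centre px py b)).
    rewrite (dinf_comm _ z) in *; lra. }
  pose proof (Hsep i k Hi Hk ik); pose proof (Hsep i l Hi Hl il).
  pose proof (Hsep j k Hj Hk jk); pose proof (Hsep j l Hj Hl jl).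
  pose proof (dinf_segment _ _ _ Sij); pose proof (edge_dinf n r px py i j Eij).
  pose proof (dinf_segment _ _ _ Skl); pose proof (edge_dinf n r px py k l Ekl).
  lra.
Qed.

Lemma abs_div_le_1 (d s : R) : 0 < s -> Rabs d <= s -> Rabs (d / s) <= 1.
Proof.
  intros Hs Hd.
  assert (Hdiv : Rabs d = Rabs (d / s) * s)
    by (rewrite <- (Rabs_pos_eq s) at 2 by lra; rewrite <- Rabs_mult; f_equal; field; lra).
  nra.
Qed.

(* [z = p_a + r_a (sx, sy)]; when [|sx| = |sy| = 1] the signs say which corner of S_a is z. *)
Definition rel_pos (r px py : nat -> R) (a : nat) (z : pt) (sx sy : R) : Prop :=
  fst z = px a + r a * sx /\ snd z = py a + r a * sy.

Lemma segment_rel_pos (r px py : nat -> R) (a b : nat) (z : pt) :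
  0 < r a -> 0 < r b ->
  in_segment (centre px py a) (centre px py b) z ->
  dinf z (centre px py a) = r a -> dinf z (centre px py b) = r b ->
  exists ux uy, Rabs ux <= 1 /\ Rabs uy <= 1 /\
    rel_pos r px py a z ux uy /\ rel_pos r px py b z (- ux) (- uy).
Proof.
  intros Ha Hb Hz Hza Hzb.
  destruct (in_segment_lerp _ _ _ Hz) as (t & Ht & ->).
  rewrite dinf_lerp_l, Rabs_pos_eq in Hza by lra.
  rewrite dinf_lerp_r, Rabs_pos_eq in Hzb by lra.
  assert (Hd : dinf (centre px py a) (centre px py b) = r a + r b) by lra.
  assert (Ht_eq : t = r a / (r a + r b))
    by (rewrite Hd in Hza; apply (Rmult_eq_reg_r (r a + r b)); [field_simplify|]; lra).
  destruct (proj1 (dinf_le_iff _ _ _) (Req_le _ _ Hd)) as [Hdx Hdy].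
  exists ((px b - px a) / (r a + r b)), ((py b - py a) / (r a + r b)).
  unfold rel_pos, lerp, centre in *; simpl in *.
  rewrite Rabs_minus_sym in Hdx, Hdy.
  split; [now apply abs_div_le_1; lra|].
  split; [now apply abs_div_le_1; lra|].
  subst t; repeat split; field; lra.
Qed.

Lemma sign_cases (s : R) : Rabs s = 1 -> s = 1 \/ s = -1.
Proof. unfold Rabs; destruct (Rcase_abs s); lra. Qed.

Lemma far_apart_signs (a b u v : R) :
  0 < a -> 0 < b -> Rabs u <= 1 -> Rabs v <= 1 ->
  a + b <= Rabs (a * u - b * v) -> u * v = -1.
Proof.
  intros Ha Hb Hu Hv Hfar.
  assert (Htri : Rabs (a * u - b * v) <= a * Rabs u + b * Rabs v).
  { unfold Rminus; eapply Rle_trans; [apply Rabs_triang|].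
    rewrite Rabs_Ropp, !Rabs_mult, (Rabs_pos_eq a), (Rabs_pos_eq b) by lra; lra. }
  assert (Hunit : Rabs u = 1 /\ Rabs v = 1) by (split; nra).
  destruct Hunit as [Hu1 Hv1].
  destruct (sign_cases u Hu1) as [-> | ->], (sign_cases v Hv1) as [-> | ->];
    try lra; exfalso; revert Hfar; unfold Rabs; destruct Rcase_abs; lra.
Qed.

Lemma orthogonal_signs (ux uy vx vy : R) :
  Rabs ux <= 1 -> Rabs uy <= 1 -> Rabs vx <= 1 -> Rabs vy <= 1 ->
  ux * vx = -1 \/ uy * vy = -1 -> ux * vx = 1 \/ uy * vy = 1 ->
  Rabs ux = 1 /\ Rabs uy = 1 /\ Rabs vx = 1 /\ Rabs vy = 1 /\ ux * vx + uy * vy = 0.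
Proof.
  unfold Rabs; intros Hux Huy Hvx Hvy.
  destruct (Rcase_abs ux), (Rcase_abs uy), (Rcase_abs vx), (Rcase_abs vy);
    intros [Hx|Hy] [Hx'|Hy']; nra.
Qed.

Lemma rel_pos_abs_diff (r px py : nat -> R) (a b : nat) (z : pt) (sx sy tx ty : R) :
  rel_pos r px py a z sx sy -> rel_pos r px py b z tx ty ->
  Rabs (px a - px b) = Rabs (r a * sx - r b * tx) /\
  Rabs (py a - py b) = Rabs (r a * sy - r b * ty).
Proof.
  intros [Hax Hay] [Hbx Hby].
  rewrite Rabs_minus_sym, (Rabs_minus_sym (py a)); split; f_equal; lra.
Qed.

Lemma crossing_signs (n : nat) (r px py : nat -> R) (i k l : nat) (z : pt)
    (ux uy vx vy : R) :
  homothetic_packing n r px py -> (i < n)%nat -> (k < n)%nat -> (l < n)%nat ->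
  i <> k -> i <> l ->
  Rabs ux <= 1 -> Rabs uy <= 1 -> Rabs vx <= 1 -> Rabs vy <= 1 ->
  rel_pos r px py i z ux uy -> rel_pos r px py k z vx vy ->
  rel_pos r px py l z (- vx) (- vy) ->
  Rabs ux = 1 /\ Rabs uy = 1 /\ Rabs vx = 1 /\ Rabs vy = 1 /\ ux * vx + uy * vy = 0.
Proof.
  intros Hpack Hi Hk Hl ik il Hux Huy Hvx Hvy Zi Zk Zl.
  pose proof (proj1 Hpack) as Hpos.
  assert (Hsep : forall a b, (a < n)%nat -> (b < n)%nat -> a <> b ->
            r a + r b <= Rabs (px a - px b) \/ r a + r b <= Rabs (py a - py b))
    by (intros a b Ha Hb ab;
        apply (le_dinf_iff (centre px py a) (centre px py b)), (packing_dinf n); assumption).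
  pose proof (Hpos i Hi) as Ri; pose proof (Hpos k Hk) as Rk; pose proof (Hpos l Hl) as Rl.
  assert (Hvx' : Rabs (- vx) <= 1) by now rewrite Rabs_Ropp.
  assert (Hvy' : Rabs (- vy) <= 1) by now rewrite Rabs_Ropp.
  destruct (rel_pos_abs_diff _ _ _ _ _ _ _ _ _ _ Zi Zk) as [Dikx Diky].
  destruct (rel_pos_abs_diff _ _ _ _ _ _ _ _ _ _ Zi Zl) as [Dilx Dily].
  apply orthogonal_signs; try assumption.
  - destruct (Hsep i k Hi Hk ik) as [Hfar|Hfar]; [left|right].
    + rewrite Dikx in Hfar; exact (far_apart_signs _ _ _ _ Ri Rk Hux Hvx Hfar).
    + rewrite Diky in Hfar; exact (far_apart_signs _ _ _ _ Ri Rk Huy Hvy Hfar).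
  - destruct (Hsep i l Hi Hl il) as [Hfar|Hfar]; [left|right].
    + rewrite Dilx in Hfar; pose proof (far_apart_signs _ _ _ _ Ri Rl Hux Hvx' Hfar); lra.
    + rewrite Dily in Hfar; pose proof (far_apart_signs _ _ _ _ Ri Rl Huy Hvy' Hfar); lra.
Qed.

Lemma signed_gap (a b s t : R) :
  0 < a -> 0 < b -> Rabs s = 1 -> Rabs t = 1 ->
  (s * t = -1 -> Rabs (a * s - b * t) = a + b) /\
  (s * t = 1 -> Rabs (a * s - b * t) < a + b).
Proof.
  intros Ha Hb Hs Ht.
  destruct (sign_cases s Hs) as [-> | ->], (sign_cases t Ht) as [-> | ->];
    unfold Rabs; destruct Rcase_abs; split; intros; lra.
Qed.

Lemma rel_pos_is_corner (r px py : nat -> R) (a : nat) (z : pt) (sx sy : R) :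
  rel_pos r px py a z sx sy -> Rabs sx = 1 -> Rabs sy = 1 -> is_corner r px py a z.
Proof.
  intros [Hx Hy] Hsx Hsy.
  destruct (sign_cases sx Hsx) as [-> | ->], (sign_cases sy Hsy) as [-> | ->];
    split; (left + right); lra.
Qed.

Lemma rel_pos_in_square (r px py : nat -> R) (a : nat) (z : pt) (sx sy : R) :
  0 < r a -> rel_pos r px py a z sx sy -> Rabs sx = 1 -> Rabs sy = 1 ->
  in_square r px py a z.
Proof.
  intros Ha [Hx Hy] Hsx Hsy; split.
  - replace (fst z - px a) with (r a * sx) by lra.
    rewrite Rabs_mult, Hsx, Rabs_pos_eq; lra.
  - replace (snd z - py a) with (r a * sy) by lra.
    rewrite Rabs_mult, Hsy, Rabs_pos_eq; lra.
Qed.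

Lemma opposite_corners_edgeEx_edgeEy (n : nat) (r px py : nat -> R) (a b : nat) (z : pt)
    (sx sy : R) :
  edgeE n r px py a b -> 0 < r a -> 0 < r b ->
  rel_pos r px py a z sx sy -> rel_pos r px py b z (- sx) (- sy) ->
  Rabs sx = 1 -> Rabs sy = 1 ->
  edgeEx n r px py a b /\ edgeEy n r px py a b.
Proof.
  intros E Ha Hb Za Zb Hsx Hsy.
  destruct (rel_pos_abs_diff _ _ _ _ _ _ _ _ _ _ Za Zb) as [Dx Dy].
  assert (Hopp : forall s, Rabs s = 1 -> Rabs (r a * s - r b * - s) = r a + r b).
  { intros s Hs; apply (signed_gap _ _ _ _ Ha Hb Hs); [now rewrite Rabs_Ropp|].
    destruct (sign_cases s Hs) as [-> | ->]; ring. }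
  rewrite Hopp in Dx, Dy by assumption.
  split; (split; [exact E | split; lra]).
Qed.

Lemma orthogonal_corners_edge_symdiff (n : nat) (r px py : nat -> R) (a b : nat) (z : pt)
    (sx sy tx ty : R) :
  (a < n)%nat -> (b < n)%nat -> a <> b -> 0 < r a -> 0 < r b ->
  rel_pos r px py a z sx sy -> rel_pos r px py b z tx ty ->
  Rabs sx = 1 -> Rabs sy = 1 -> Rabs tx = 1 -> Rabs ty = 1 ->
  sx * tx + sy * ty = 0 ->
  edge_symdiff n r px py a b.
Proof.
  intros Ha Hb ab Ra Rb Za Zb Hsx Hsy Htx Hty Horth.
  assert (E : edgeE n r px py a b).
  { repeat split; try assumption; exists z; split;
      eapply rel_pos_in_square; eassumption. }
  destruct (rel_pos_abs_diff _ _ _ _ _ _ _ _ _ _ Za Zb) as [Dx Dy].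
  destruct (signed_gap _ _ _ _ Ra Rb Hsx Htx) as [Gx_opp Gx_same].
  destruct (signed_gap _ _ _ _ Ra Rb Hsy Hty) as [Gy_opp Gy_same].
  assert (Hprod : (sx * tx = -1 /\ sy * ty = 1) \/ (sx * tx = 1 /\ sy * ty = -1)).
  { destruct (sign_cases sx Hsx) as [-> | ->], (sign_cases tx Htx) as [-> | ->]; lra. }
  unfold edge_symdiff, edgeEx, edgeEy; rewrite Dx, Dy.
  destruct Hprod as [[Px Py] | [Px Py]].
  - pose proof (Gx_opp Px); pose proof (Gy_same Py).
    left; split; [split; [exact E | split; lra] | intros (_ & Hgap & _); lra].
  - pose proof (Gx_same Px); pose proof (Gy_opp Py).
    right; split; [split; [exact E | split; lra] | intros (_ & Hgap & _); lra].
Qed.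

Theorem lemma12 (n : nat) (r px py : nat -> R) (i j k l : nat) :
  homothetic_packing n r px py ->
  edgeE n r px py i j -> edgeE n r px py k l ->
  i <> k -> i <> l -> j <> k -> j <> l ->
  (* (1) interiors of S_i ∪ S_j and S_k ∪ S_l are disjoint *)
  (forall z,
     ~ (interior2 (fun w : pt => in_square r px py i w \/ in_square r px py j w) z /\
        interior2 (fun w : pt => in_square r px py k w \/ in_square r px py l w) z)) /\
  (* (2) *)
  ((exists z, in_segment (centre px py i) (centre px py j) z /\
              in_segment (centre px py k) (centre px py l) z) ->
   (exists c, is_corner r px py i c /\ is_corner r px py j c /\
              is_corner r px py k c /\ is_corner r px py l c) /\
   (edgeEx n r px py i j /\ edgeEy n r px py i j) /\
   (edgeEx n r px py k l /\ edgeEy n r px py k l) /\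
   edge_symdiff n r px py i k /\ edge_symdiff n r px py i l /\
   edge_symdiff n r px py j k /\ edge_symdiff n r px py j l).
Proof.
  intros Hpack Eij Ekl ik il jk jl.
  pose proof Eij as (Hi & Hj & _); pose proof Ekl as (Hk & Hl & _).
  split; [exact (union_interiors_disjoint n r px py i j k l Hpack Hi Hj Hk Hl ik il jk jl)|].
  intros (z & Sij & Skl).
  pose proof (proj1 Hpack i Hi) as Ri; pose proof (proj1 Hpack j Hj) as Rj.
  pose proof (proj1 Hpack k Hk) as Rk; pose proof (proj1 Hpack l Hl) as Rl.
  destruct (crossing_point_radii n r px py i j k l z Hpack Eij Ekl ik il jk jl Sij Skl)
    as (Di & Dj & Dk & Dl).
  destruct (segment_rel_pos r px py i j z Ri Rj Sij Di Dj) as (ux & uy & Bux & Buy & Zi & Zj).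
  destruct (segment_rel_pos r px py k l z Rk Rl Skl Dk Dl) as (vx & vy & Bvx & Bvy & Zk & Zl).
  destruct (crossing_signs n r px py i k l z ux uy vx vy Hpack Hi Hk Hl ik il
              Bux Buy Bvx Bvy Zi Zk Zl) as (Ux & Uy & Vx & Vy & Horth).
  assert (Ux' : Rabs (- ux) = 1) by now rewrite Rabs_Ropp.
  assert (Uy' : Rabs (- uy) = 1) by now rewrite Rabs_Ropp.
  assert (Vx' : Rabs (- vx) = 1) by now rewrite Rabs_Ropp.
  assert (Vy' : Rabs (- vy) = 1) by now rewrite Rabs_Ropp.
  refine (conj _ (conj _ (conj _ (conj _ (conj _ (conj _ _)))))).
  - exists z; repeat split; eapply rel_pos_is_corner; eassumption.
  - exact (opposite_corners_edgeEx_edgeEy n r px py i j z ux uy Eij Ri Rj Zi Zj Ux Uy).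
  - exact (opposite_corners_edgeEx_edgeEy n r px py k l z vx vy Ekl Rk Rl Zk Zl Vx Vy).
  - apply (orthogonal_corners_edge_symdiff n r px py i k z ux uy vx vy); auto.
  - apply (orthogonal_corners_edge_symdiff n r px py i l z ux uy (- vx) (- vy)); auto; lra.
  - apply (orthogonal_corners_edge_symdiff n r px py j k z (- ux) (- uy) vx vy); auto; lra.
  - apply (orthogonal_corners_edge_symdiff n r px py j l z (- ux) (- uy) (- vx) (- vy)); auto; lra.
Qed.
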